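(* Let $m\geq 2$ and $n\geq 2$ be integers, let $P_m$ be the path of order $m$ and $K_n$ the complete graph of order $n$. Then $rvcl(P_m\diamond K_n)=\max\{rvc(P_m),\,n+2\}$.
   Context: All graphs are finite, simple, connected and undirected; $d$ denotes graph distance. A rainbow vertex $k$-coloring of $G$ is a map $c:V(G)\to\{1,\dots,k\}$ such that every two vertices are joined by a path whose internal vertices all receive distinct colors; $rvc(G)$ is the least $k$ for which $G$ has one. For such $c$ let $R_i=c^{-1}(i)$; the rainbow code of $v$ is $(d(v,R_1),\dots,d(v,R_k))$ with $d(v,R_i)=\min_{x\in R_i}d(v,x)$. A locating rainbow $k$-coloring is a rainbow vertex $k$-coloring in which distinct vertices have distinct rainbow codes; $rvcl(G)$ is the least $k$ for which one exists. For graphs $G_m$ (order $m$) and $H_n$ (order $n$) on disjoint vertex sets, the edge corona $G_m\diamond H_n$ is obtained from one copy of $G_m$ and $|E(G_m)|$ vertex-disjoint copies of $H_n$, one per edge of $G_m$, by joining both end vertices of the $j$-th edge of $G_m$ to every vertex of the $j$-th copy of $H_n$. *)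

From mathcomp Require Import all_boot.
Set Implicit Arguments. Unset Strict Implicit. Unset Printing Implicit Defensive.

Section GraphDefs.
Variables (T : finType) (e : rel T).

(* graph distance: least k such that a walk of length k joins u to v
   (for connected graphs this is always < #|T|) *)
Definition dist (u v : T) : nat :=
  find (fun k => [exists p : k.-tuple T, path e u p && (last u p == v)])
       (iota 0 #|T|).

(* d(v, A) = min_{x in A} d(v, x); None encodes d(v, empty set) = infinity *)
Definition setdist (v : T) (A : {set T}) : option nat :=
  if A == set0 then None else Some (\big[minn/#|T|]_(x in A) dist v x).

(* internal vertices of the path u :: p (p ends at the last vertex) *)
Definition internal (p : seq T) : seq T := take (size p).-1 p.

Definition rainbow_path (k : nat) (c : T -> 'I_k) (u v : T) (p : seq T) : bool :=
  [&& path e u p, last u p == v, uniq (u :: p) & uniq (map c (internal p))].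

(* rainbow vertex k-colouring (colours are 0..k-1 instead of 1..k);
   a path without repeated vertices has fewer than #|T| edges *)
Definition rainbow_coloring (k : nat) (c : T -> 'I_k) : bool :=
  [forall u, forall v,
     [exists l : 'I_#|T|, exists p : l.-tuple T, rainbow_path c u v p]].

Definition color_class (k : nat) (c : T -> 'I_k) (i : 'I_k) : {set T} :=
  [set x | c x == i].

Definition rainbow_code (k : nat) (c : T -> 'I_k) (v : T) : {ffun 'I_k -> option nat} :=
  [ffun i => setdist v (color_class c i)].

Definition locating_rainbow_coloring (k : nat) (c : T -> 'I_k) : bool :=
  rainbow_coloring c &&
  [forall u, forall v, (u != v) ==> (rainbow_code c u != rainbow_code c v)].

(* least k admitting such a colouring (an injective colouring with #|T|
   colours always works for connected graphs, so the search range suffices) *)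
Definition rvc : nat :=
  find (fun k => [exists c : {ffun T -> 'I_k}, rainbow_coloring c])
       (iota 0 #|T|.+1).

Definition rvcl : nat :=
  find (fun k => [exists c : {ffun T -> 'I_k}, locating_rainbow_coloring c])
       (iota 0 #|T|.+1).

End GraphDefs.

Definition path_rel (m : nat) : rel 'I_m :=
  fun i j => (i.+1 == j :> nat) || (j.+1 == i :> nat).

Arguments path_rel m : clear implicits.

Definition complete_rel (n : nat) : rel 'I_n := fun x y => x != y.

Arguments complete_rel n : clear implicits.

Section EdgeCorona.
Variables (T U : finType) (e : rel T) (f : rel U).

Definition is_edge (A : {set T}) : bool :=
  [exists x, exists y, e x y && (A == [set x; y])].

Definition edge_t := {A : {set T} | is_edge A}.

(* vertices: those of G, plus one copy of H per edge of G *)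
Definition ecorona_vertex : finType := (T + (edge_t * U))%type.

Definition ecorona_rel : rel ecorona_vertex := fun a b =>
  match a, b with
  | inl x, inl y => e x y
  | inl x, inr (E, _) => x \in val E
  | inr (E, _), inl x => x \in val E
  | inr (E, u), inr (F, w) => (E == F) && f u w
  end.

End EdgeCorona.
Arguments ecorona_vertex [T] U e.
Arguments ecorona_rel [T U] e f _ _.

From mathcomp Require Import all_boot zify.
Set Implicit Arguments. Unset Strict Implicit. Unset Printing Implicit Defensive.

(* Vertex 0 of the path and the copy of K_n on the edge {0,1} are n+1 pairwise
   true twins, all adjacent to vertex 1.  True twins of equal colour have equal
   rainbow codes, so a locating colouring separates them; and one more colour is
   needed, for otherwise vertex 1 has the colour of one of the twins and, being
   at distance 1 from every other colour class, the same code.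

   No edge of the corona jumps over a path vertex, so every walk between two
   path vertices visits all path vertices in between.  Hence a colouring of the
   corona is rainbow exactly when it is injective on the interior path vertices
   (two non-adjacent vertices are joined through a run of interior path
   vertices), and likewise for P_m itself.  So rainbow colourings of the corona
   restrict to rainbow colourings of P_m, and rvc(P_m) >= m - 2.  Conversely,
   colour the interior path vertices injectively, the two ends of the path with
   two reserved colours and the copies of K_n with the remaining ones: this
   needs max(rvc(P_m), n + 2) colours, and it is locating because the distances
   to the two end classes fix the position of a vertex along the path. *)

Lemma find_iota_le (P : pred nat) N k : P k -> find P (iota 0 N) <= k.
Proof.
move=> Pk; case: (ltnP k N) => [kN | Nk].
  by rewrite leqNgt; apply/negP => /(before_find 0); rewrite nth_iota // add0n Pk.
by apply: leq_trans (find_size _ _) _; rewrite size_iota.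
Qed.

Lemma find_iota_sat (P : pred nat) N :
  find P (iota 0 N) < N -> P (find P (iota 0 N)).
Proof.
move=> lt; have hasP : has P (iota 0 N) by rewrite has_find size_iota.
by have := nth_find 0 hasP; rewrite nth_iota ?add0n.
Qed.

Lemma find_iota_ge (P : pred nat) N L :
  L <= N -> (forall k, P k -> L <= k) -> L <= find P (iota 0 N).
Proof.
move=> LN lbP; case: (ltnP (find P (iota 0 N)) N) => [/find_iota_sat | ]; first exact: lbP.
exact: leq_trans.
Qed.

Lemma uniq_map_inj_in (T1 T2 : eqType) (f : T1 -> T2) (s : seq T1) :
  uniq (map f s) -> {in s &, injective f}.
Proof.
elim: s => [|y s IH] //= /andP [fy_s us] a b; rewrite !inE.
case/orP => [/eqP -> | ha]; case/orP => [/eqP -> | hb] // fab.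
- by move: fy_s; rewrite fab map_f.
- by move: fy_s; rewrite -fab map_f.
- exact: IH.
Qed.

Lemma bigmin_le (I : finType) (A : {pred I}) (F : I -> nat) N z :
  z \in A -> \big[minn/N]_(x in A) F x <= F z.
Proof.
move=> zA; rewrite -big_filter.
have : z \in [seq x <- index_enum I | x \in A] by rewrite mem_filter zA mem_index_enum.
elim: (filter _ _) => [|y s IH] //; rewrite inE big_cons => /predU1P [<- | /IH].
  exact: geq_minl.
exact: leq_trans (geq_minr _ _).
Qed.

Section Graph.
Variables (T : finType) (e : rel T).

Lemma dist_le_card u v : dist e u v <= #|T|.
Proof. by apply: leq_trans (find_size _ _) _; rewrite size_iota. Qed.

Lemma dist_le_walk u p : path e u p -> dist e u (last u p) <= size p.
Proof.
by move=> pp; apply: find_iota_le; apply/existsP; exists (in_tuple p); rewrite pp /=.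
Qed.

Lemma dist_walk u v : dist e u v < #|T| ->
  exists p, [/\ path e u p, last u p = v & size p = dist e u v].
Proof.
move/find_iota_sat/existsP => [p /andP [pp /eqP pv]].
by exists p; rewrite size_tuple.
Qed.

Lemma dist_xx u : dist e u u = 0.
Proof. by apply/eqP; rewrite -leqn0; apply: (@dist_le_walk u [::]). Qed.

Lemma dist_eq0 u v : dist e u v = 0 -> u = v.
Proof.
move=> d0; have /dist_walk [p [_ pv sp]] : dist e u v < #|T|.
  by rewrite d0; apply/card_gt0P; exists u.
by move: sp pv; rewrite d0; case: p.
Qed.

Lemma dist_adj_le x y z : e x y -> dist e x z <= (dist e y z).+1.
Proof.
move=> exy; case: (ltnP (dist e y z) #|T|) => [/dist_walk [p [pp <- <-]] | ge].
  by apply: (@dist_le_walk x (y :: p)); rewrite /= exy.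
exact: leq_trans (dist_le_card x z) (leqW ge).
Qed.

Lemma path_lipschitz (f : T -> nat) :
  (forall x y, e x y -> f x <= (f y).+1) ->
  forall u p, path e u p -> f u <= f (last u p) + size p.
Proof.
move=> lip u p; elim: p u => [|y p IH] u /=; first by rewrite addn0.
by case/andP => /lip fuy /IH; lia.
Qed.

Lemma setdist_eq v (A : {set T}) z :
  z \in A -> (forall x, x \in A -> dist e v z <= dist e v x) ->
  setdist e v A = Some (dist e v z).
Proof.
move=> zA zmin; rewrite /setdist; case: eqP => [A0 | _].
  by move: zA; rewrite A0 inE.
congr Some; apply/eqP; rewrite eqn_leq bigmin_le //=.
apply: (big_ind (fun d => dist e v z <= d)); first exact: dist_le_card.
  by move=> a b ha hb; rewrite leq_min ha hb.
exact: zmin.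
Qed.

Lemma setdist_eq0 v (A : {set T}) : (setdist e v A == Some 0) = (v \in A).
Proof.
apply/idP/idP => [| vA]; last first.
  by rewrite -(dist_xx v) (@setdist_eq v A v) // => x _; rewrite dist_xx.
case: (set_0Vmem A) => [-> | [z0 z0A]]; first by rewrite /setdist eqxx.
have [z zA zmin] := arg_minnP (dist e v) z0A.
by rewrite (setdist_eq zA zmin) => /eqP [/dist_eq0 ->].
Qed.

Lemma setdist_mem v (A : {set T}) : v \in A -> setdist e v A = Some 0.
Proof. by move=> vA; apply/eqP; rewrite setdist_eq0. Qed.

Lemma setdist_adj v (A : {set T}) z :
  v \notin A -> z \in A -> e v z -> setdist e v A = Some 1.
Proof.
move=> vA zA evz; have dist_gt0 x : x \in A -> 0 < dist e v x.
  by move=> xA; apply: contraNT vA; rewrite -eqn0Ngt => /eqP/dist_eq0 ->.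
have dvz : dist e v z <= 1 by have := dist_adj_le z evz; rewrite dist_xx.
suff <- : dist e v z = 1 by apply: setdist_eq => // x /dist_gt0; lia.
by apply/eqP; rewrite eqn_leq dvz dist_gt0.
Qed.

Lemma setdist_potential (A : {set T}) (f : T -> nat) v :
  (forall x, (f x == 0) = (x \in A)) ->
  (forall x y, e x y -> f x <= (f y).+1) ->
  (forall x, 0 < f x -> exists2 y, e x y & f y < f x) ->
  (forall x, f x <= #|T|) ->
  setdist e v A = Some (f v).
Proof.
move=> f0 lip descent bound.
have reach x : exists2 z, z \in A & dist e x z <= f x.
  move: {2}(f x) (leqnn (f x)) => N; elim: N x => [|N IH] x fxN.
    by exists x; [rewrite -f0; lia | rewrite dist_xx].
  have [fx0 | fx_pos] := posnP (f x); first by exists x; rewrite ?dist_xx // -f0 fx0.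
  have [y exy fyx] := descent x fx_pos.
  have [z zA dyz] := IH y (ltnSE (leq_trans fyx fxN)).
  by exists z => //; apply: leq_trans (dist_adj_le z exy) _; lia.
have below z : z \in A -> f v <= dist e v z.
  move=> zA; case: (ltnP (dist e v z) #|T|) => [/dist_walk [p [pp pz <-]] | ge].
    by have := path_lipschitz lip pp; rewrite pz (eqP (etrans (f0 z) zA)).
  exact: leq_trans (bound v) ge.
have [z zA dvz] := reach v.
have fz : dist e v z = f v by apply/eqP; rewrite eqn_leq dvz below.
by rewrite -fz; apply: setdist_eq => // x /below; rewrite fz.
Qed.

Lemma internal_rcons (s : seq T) z : internal (rcons s z) = s.
Proof. by rewrite /internal size_rcons -cats1 take_size_cat. Qed.

Lemma internal_level (h : T -> nat) t u p :
  (forall a b, e a b -> ~~ (h a < t < h b)) ->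
  path e u p -> h u < t < h (last u p) -> exists2 z, z \in internal p & h z = t.
Proof.
move=> no_skip; elim: p u => [|y p IH] u /=; first by lia.
case/andP => euy pp ut; have [yt | ty | yt] := ltngtP (h y) t.
- have [|z zp hz] := IH y pp; first by lia.
  exists z => //; case/lastP: p zp {IH pp ut} => // s x.
  by rewrite -rcons_cons !internal_rcons inE orbC => ->.
- by have := no_skip _ _ euy; lia.
- exists y => //; case/lastP: p pp ut {IH} => [|s x] /=; first by lia.
  by rewrite -rcons_cons internal_rcons inE eqxx.
Qed.

Lemma rainbow_path_rcons k (c : T -> 'I_k) u v s :
  rainbow_path e c u v (rcons s v) =
  [&& path e u (rcons s v), uniq (u :: rcons s v) & uniq (map c s)].
Proof. by rewrite /rainbow_path last_rcons eqxx internal_rcons. Qed.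

Lemma rainbow_coloringP k (c : T -> 'I_k) :
  reflect (forall u v, exists p, rainbow_path e c u v p) (rainbow_coloring e c).
Proof.
apply: (iffP forallP) => [rc u v | rc u].
  by have /forallP/(_ v)/existsP [l /existsP [p rp]] := rc u; exists p.
apply/forallP => v; have [p rp] := rc u v; have /and4P [_ _ up _] := rp.
have lt : size p < #|T|.
  by rewrite -[(size p).+1]/(size (u :: p)) -(card_uniqP up) max_card.
by apply/existsP; exists (Ordinal lt); apply/existsP; exists (in_tuple p).
Qed.

Lemma rainbow_inj_unavoidable k (c : T -> 'I_k) u v (S : pred T) :
  rainbow_coloring e c ->
  (forall p, path e u p -> last u p = v -> {subset S <= internal p}) ->
  {in S &, injective c}.
Proof.
move=> /rainbow_coloringP /(_ u v) [p /and4P [pp /eqP pv _ ip]] unavoidable.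
by apply: (sub_in2 (unavoidable p pp pv)); apply: uniq_map_inj_in.
Qed.

Lemma eq_rainbow_coloring k (c c' : T -> 'I_k) :
  c =1 c' -> rainbow_coloring e c = rainbow_coloring e c'.
Proof.
move=> cc'; have eq_rp u v p : rainbow_path e c u v p = rainbow_path e c' u v p.
  by rewrite /rainbow_path (eq_map cc').
by apply/rainbow_coloringP/rainbow_coloringP => rc u v; have [p] := rc u v;
  exists p; rewrite ?eq_rp // -eq_rp.
Qed.

Lemma eq_locating_rainbow_coloring k (c c' : T -> 'I_k) :
  c =1 c' -> locating_rainbow_coloring e c = locating_rainbow_coloring e c'.
Proof.
move=> cc'; have eq_code v : rainbow_code e c v = rainbow_code e c' v.
  by apply/ffunP => i; rewrite !ffunE; congr setdist; apply/setP => x; rewrite !inE cc'.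
rewrite /locating_rainbow_coloring (eq_rainbow_coloring cc'); congr andb.
by apply: eq_forallb => u; apply: eq_forallb => v; rewrite !eq_code.
Qed.

Lemma rvc_le k (c : T -> 'I_k) : rainbow_coloring e c -> rvc e <= k.
Proof.
move=> rc; apply: find_iota_le; apply/existsP; exists (finfun c).
by rewrite (eq_rainbow_coloring (ffunE c)).
Qed.

Lemma rvc_ge L : L <= #|T|.+1 ->
  (forall k (c : T -> 'I_k), rainbow_coloring e c -> L <= k) -> L <= rvc e.
Proof. by move=> LN lbL; apply: find_iota_ge => // k /existsP [c /lbL]. Qed.

Lemma rvc_le_card : rvc e <= #|T|.+1.
Proof. by apply: leq_trans (find_size _ _) _; rewrite size_iota. Qed.

Lemma rvcl_le k (c : T -> 'I_k) : locating_rainbow_coloring e c -> rvcl e <= k.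
Proof.
move=> lc; apply: find_iota_le; apply/existsP; exists (finfun c).
by rewrite (eq_locating_rainbow_coloring (ffunE c)).
Qed.

Lemma rvcl_ge L : L <= #|T|.+1 ->
  (forall k (c : T -> 'I_k), locating_rainbow_coloring e c -> L <= k) -> L <= rvcl e.
Proof. by move=> LN lbL; apply: find_iota_ge => // k /existsP [c /lbL]. Qed.

Hypothesis e_sym : symmetric e.

Lemma rainbow_path_rev k (c : T -> 'I_k) u v p :
  rainbow_path e c u v p -> rainbow_path e c v u (rev (belast u p)).
Proof.
move=> rp; have /and4P [_ /eqP lp _ _] := rp; subst v; move: rp.
case/lastP: p => [|s y]; first by rewrite /rainbow_path /= eqxx.
rewrite last_rcons belast_rcons rev_cons !rainbow_path_rcons => /and3P [pp up ip].
apply/and3P; split; last by rewrite map_rev rev_uniq.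
  have := rev_path e u (rcons s y); rewrite last_rcons belast_rcons rev_cons => ->.
  by apply: sub_path pp => a b; rewrite /= e_sym.
by rewrite -rev_cons -rev_rcons rev_uniq.
Qed.

Lemma rainbow_coloring_wlog k (c : T -> 'I_k) (h : T -> nat) :
  (forall u v, h u <= h v -> exists p, rainbow_path e c u v p) ->
  rainbow_coloring e c.
Proof.
move=> connect_le; apply/rainbow_coloringP => u v.
case: (leqP (h u) (h v)) => [/connect_le // | /ltnW /connect_le [p /rainbow_path_rev rp]].
by exists (rev (belast v p)).
Qed.

Hypothesis e_irr : irreflexive e.

Definition true_twins (x y : T) : Prop :=
  e x y /\ forall w, w != x -> w != y -> e x w = e y w.

Lemma true_twins_sym x y : true_twins x y -> true_twins y x.
Proof. by case=> exy twin; split=> [|w wy wx]; [rewrite e_sym | rewrite twin]. Qed.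

Lemma twins_dist x y z :
  true_twins x y -> z != x -> z != y -> dist e x z <= dist e y z.
Proof.
move=> [exy twin] zx zy; case: (ltnP (dist e y z) #|T|) => [|ge]; last first.
  exact: leq_trans (dist_le_card x z) ge.
case/dist_walk => [[|w q] [/= pq qz <-]]; first by rewrite -qz eqxx in zy.
case/andP: pq => eyw pq; rewrite -qz.
have [<- | wx] := eqVneq w x; first exact: leqW (dist_le_walk pq).
have wy : w != y by apply: contraTneq eyw => ->; rewrite e_irr.
by apply: (@dist_le_walk x (w :: q)); rewrite /= twin // eyw.
Qed.

Lemma twins_code k (c : T -> 'I_k) x y :
  true_twins x y -> c x = c y -> rainbow_code e c x = rainbow_code e c y.
Proof.
move=> xy cxy; apply/ffunP => i; rewrite !ffunE.
have [<- | ci] := eqVneq (c x) i; first by rewrite !setdist_mem // inE ?cxy.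
rewrite /setdist; case: ifP => // _; congr Some; apply: eq_bigr => z; rewrite inE => /eqP cz.
have zx : z != x by apply: contraNneq ci => zx; rewrite -zx cz eqxx.
have zy : z != y by apply: contraNneq ci => zy; rewrite cxy -zy cz eqxx.
by apply/eqP; rewrite eqn_leq !twins_dist //; apply: true_twins_sym.
Qed.

Lemma locating_twin_family (I : finType) (g : I -> T) x k (c : T -> 'I_k) :
  locating_rainbow_coloring e c -> injective g ->
  (forall i j, i != j -> true_twins (g i) (g j)) ->
  (forall i, x != g i /\ e x (g i)) -> #|I| < k.
Proof.
case/andP => _ /forallP locating g_inj twins x_adj.
have code_inj u v : rainbow_code e c u = rainbow_code e c v -> u = v.
  move=> cuv; apply/eqP; apply: contraT => uv.
  by have /forallP/(_ v) := locating u; rewrite uv cuv eqxx.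
have cg_inj : injective (c \o g).
  move=> i j /= cij; have [// | ij] := eqVneq i j.
  exact: g_inj (code_inj _ _ (twins_code (twins i j ij) cij)).
have card_le : #|I| <= k by rewrite -[k in _ <= k](card_ord k) (leq_card _ cg_inj).
rewrite ltn_neqAle card_le andbT; apply/eqP => card_k.
have card_ge : #|'I_k| <= #|I| by rewrite card_ord card_k.
have onto i : exists j, c (g j) = i.
  by have /codomP [j ->] := inj_card_onto cg_inj card_ge i; exists j.
have [a0 ca0] := onto (c x); have [/eqP xa0 _] := x_adj a0; apply/xa0/code_inj.
apply/ffunP => i; rewrite !ffunE.
have [<- | ci] := eqVneq (c x) i; first by rewrite !setdist_mem // inE ?ca0.
have [b cb] := onto i.
have a0b : a0 != b by apply: contraNneq ci => a0b; rewrite -ca0 a0b cb eqxx.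
have [bi nxi na0i] : [/\ g b \in color_class c i, x \notin color_class c i
                       & g a0 \notin color_class c i] by rewrite !inE ?ca0 cb eqxx ci.
by rewrite !(setdist_adj _ bi) //; [case: (twins _ _ a0b) | case: (x_adj b)].
Qed.

End Graph.

Section PathGraph.
Variable m' : nat.
Local Notation m := m'.+2.
Local Notation G := (path_rel m).

Lemma path_rel_sym : symmetric G.
Proof. by move=> x y; rewrite /path_rel orbC. Qed.

Definition interior : pred 'I_m := [pred x : 'I_m | 0 < x <= m'].

Lemma in_interior x : (x \in interior) = (0 < x <= m').
Proof. by []. Qed.

Definition ord_iota a l : seq 'I_m := [seq inord j | j <- iota a l].

Lemma mem_ord_iota a l (x : 'I_m) :
  a + l <= m -> (x \in ord_iota a l) = (a <= x < a + l).
Proof.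
move=> al; apply/mapP/idP => [[j] | xal]; last first.
  by exists (val x); rewrite ?mem_iota ?inord_val.
by rewrite mem_iota => jal ->; rewrite inordK //; lia.
Qed.

Lemma uniq_ord_iota a l : a + l <= m -> uniq (ord_iota a l).
Proof.
move=> al; rewrite map_inj_in_uniq ?iota_uniq // => i j; rewrite !mem_iota => ial jal.
by move/(congr1 val); rewrite /= !inordK //; lia.
Qed.

Lemma path_ord_iota a l : a + l < m ->
  path G (inord a) (ord_iota a.+1 l) &&
  (last (inord a) (ord_iota a.+1 l) == inord (a + l)).
Proof.
elim: l a => [|l IH] a al; first by rewrite addn0 eqxx.
rewrite -addSnnS in al *; rewrite /= -andbA; apply/andP; split; last exact: IH.
by rewrite /path_rel !inordK //; lia.
Qed.

Lemma interior_inj_card k (c : 'I_m -> 'I_k) :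
  {in interior &, injective c} -> m' <= k.
Proof.
move=> c_inj; have sub_int : {subset ord_iota 1 m' <= interior}.
  by move=> x; rewrite mem_ord_iota // in_interior; lia.
have := max_card (mem (map c (ord_iota 1 m'))).
rewrite (card_uniqP _) ?size_map ?size_iota ?card_ord // map_inj_in_uniq ?uniq_ord_iota //.
by apply: (sub_in2 sub_int).
Qed.

Lemma path_rainbow_coloring k (c : 'I_m -> 'I_k) :
  {in interior &, injective c} -> rainbow_coloring G c.
Proof.
move=> c_inj; apply: (rainbow_coloring_wlog path_rel_sym (h := val)) => u v uv.
have [<- | neq] := eqVneq u v; first by exists [::]; rewrite /rainbow_path /= eqxx.
have lt_uv : u < v by move: uv neq; rewrite -val_eqE /=; lia.
have v_lt := ltn_ord v.
set s := ord_iota u.+1 (v - u).-1.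
have /andP [ps /eqP ls] :
    path G (inord u) s && (last (inord u) s == inord (u + (v - u).-1)).
  by apply: path_ord_iota; lia.
rewrite inord_val in ps ls.
have mem_s x : (x \in s) = (u.+1 <= x < u.+1 + (v - u).-1) by rewrite mem_ord_iota //; lia.
exists (rcons s v); rewrite rainbow_path_rcons; apply/and3P; split.
- by rewrite rcons_path ps ls /= /path_rel inordK; lia.
- rewrite /= mem_rcons inE negb_or neq mem_s rcons_uniq mem_s uniq_ord_iota; lia.
- rewrite map_inj_in_uniq ?uniq_ord_iota //; first lia.
  by apply: (sub_in2 _ c_inj) => x; rewrite mem_s in_interior; lia.
Qed.

Lemma path_rainbow_inj k (c : 'I_m -> 'I_k) :
  rainbow_coloring G c -> {in interior &, injective c}.
Proof.
move=> rc; apply: (rainbow_inj_unavoidable (u := ord0) (v := ord_max) rc).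
move=> p pp pv x; rewrite in_interior => xI.
have no_skip (a b : 'I_m) : G a b -> ~~ (a < x < b) by rewrite /path_rel; lia.
by have [|z zp /val_inj <- //] := internal_level no_skip pp; rewrite pv /=; lia.
Qed.

Lemma rvc_path_ge : m' <= rvc G.
Proof.
apply: rvc_ge; first by rewrite card_ord; lia.
by move=> k c /path_rainbow_inj /interior_inj_card.
Qed.

End PathGraph.

Arguments interior : clear implicits.

Section EdgeCoronaPathComplete.
Variables m' n : nat.
Local Notation m := m'.+2.
Local Notation G := (path_rel m).
Local Notation V := (ecorona_vertex 'I_n G).
Local Notation eV := (ecorona_rel G (complete_rel n)).

Definition edge_low (E : edge_t G) : nat := (\max_(x in val E) x).-1.

Lemma edge_lowP (E : edge_t G) : (edge_low E).+1 < m /\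
  forall x : 'I_m, (x \in val E) = (x == edge_low E :> nat) || (x == (edge_low E).+1 :> nat).
Proof.
case: E => A A_edge; case/existsP: (A_edge) => x /existsP [y /andP [xy /eqP A_xy]].
have x_y : x \notin [set y].
  by rewrite in_set1; apply: contraTneq xy => ->; rewrite /path_rel; lia.
rewrite /edge_low /= A_xy big_setU1 //= big_set1; move: xy; rewrite /path_rel => xy.
have := ltn_ord x; have := ltn_ord y; split; first lia.
by move=> z; rewrite !inE -!val_eqE /=; lia.
Qed.

Lemma edge_low_lt (E : edge_t G) : (edge_low E).+1 < m.
Proof. by case: (edge_lowP E). Qed.

Lemma mem_edge_low (E : edge_t G) (x : 'I_m) :
  (x \in val E) = (x == edge_low E :> nat) || (x == (edge_low E).+1 :> nat).
Proof. by case: (edge_lowP E) => _ ->. Qed.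

Lemma edge_low_inj : injective edge_low.
Proof. by move=> E F EF; apply/val_inj/setP => x; rewrite !mem_edge_low EF. Qed.

Lemma edge01_is_edge : is_edge G [set inord 0; inord 1].
Proof.
apply/existsP; exists (inord 0); apply/existsP; exists (inord 1).
by rewrite eqxx /path_rel !inordK.
Qed.

Definition edge01 : edge_t G := exist (is_edge G) _ edge01_is_edge.

Lemma edge_low01 : edge_low edge01 = 0.
Proof. by have := mem_edge_low edge01 (inord 0); rewrite /= !inE eqxx inordK //; lia. Qed.

Lemma card_ecorona : m + n <= #|V|.
Proof.
rewrite card_sum card_prod !card_ord leq_add2l leq_pmull //.
by apply/card_gt0P; exists edge01.
Qed.

Lemma ecorona_sym : symmetric eV.
Proof.
move=> [x|[E u]] [y|[F w]] //=; first exact: path_rel_sym.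
by rewrite /complete_rel [E == F]eq_sym [u == w]eq_sym.
Qed.

Lemma ecorona_irr : irreflexive eV.
Proof. by move=> [x|[E u]]; rewrite /= /complete_rel /path_rel ?eqxx //; lia. Qed.

Definition pvert (j : nat) : V := inl (inord j).

Definition pos (a : V) : nat :=
  match a with inl x => 2 * x | inr (E, _) => (2 * edge_low E).+1 end.

Lemma pos_no_skip j a b : eV a b -> ~~ (pos a < 2 * j < pos b).
Proof.
case: a b => [x|[E u]] [y|[F w]] /=; rewrite ?mem_edge_low /path_rel; try lia.
by case/andP => /eqP -> _; lia.
Qed.

Definition segment lo hi : {set V} :=
  [set a : V | if a is inl x then lo <= x <= hi else false].

Definition segment_dist lo hi (a : V) : nat :=
  match a with
  | inl x => (lo - x) + (x - hi)
  | inr (E, _) => maxn 1 ((lo - edge_low E) + ((edge_low E).+1 - hi))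
  end.

Lemma setdist_segment lo hi a :
  lo <= hi < m -> setdist eV a (segment lo hi) = Some (segment_dist lo hi a).
Proof.
move=> lohi; apply: setdist_potential.
- by move=> [x|[E u]]; rewrite inE /=; lia.
- move=> [x|[E u]] [y|[F w]] /=; rewrite ?mem_edge_low /path_rel; try lia.
  by case/andP => /eqP ->.
- move=> [x|[E u]] /= d_pos.
    have := ltn_ord x; case: (ltnP x lo) => x_lo.
      by exists (pvert x.+1); rewrite /= /path_rel ?inordK; lia.
    by exists (pvert x.-1); rewrite /= /path_rel ?inordK; lia.
  have := edge_low_lt E; case: (ltnP (edge_low E) lo) => E_lo.
    by exists (pvert (edge_low E).+1); rewrite /= ?mem_edge_low ?inordK; lia.
  by exists (pvert (edge_low E)); rewrite /= ?mem_edge_low ?inordK; lia.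
- move=> a'; apply: leq_trans card_ecorona; case: a' => [x|[E u]] /=.
    by have := ltn_ord x; lia.
  by have := edge_low_lt E; lia.
Qed.

Definition next_index (a : V) : nat :=
  match a with inl x => x.+1 | inr (E, _) => (edge_low E).+1 end.

Definition prev_index (a : V) : nat :=
  match a with inl x => x.-1 | inr (E, _) => edge_low E end.

Lemma adj_next_index u : next_index u < m -> eV u (pvert (next_index u)).
Proof. by case: u => [x|[E w]] /= lt; rewrite /= ?mem_edge_low /path_rel inordK //; lia. Qed.

Lemma adj_prev_index v : 0 < prev_index v -> eV (pvert (prev_index v)) v.
Proof.
case: v => [y|[F w]] /= gt0.
  by rewrite /= /path_rel inordK; have := ltn_ord y; lia.
by rewrite /= mem_edge_low inordK ?eqxx //; have := edge_low_lt F; lia.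
Qed.

Lemma interior_run_bounds u v :
  u != v -> ~~ eV u v -> pos u <= pos v ->
  [/\ 0 < next_index u, next_index u <= prev_index v & prev_index v <= m'].
Proof.
case: u v => [x|[E w]] [y|[F w']]; rewrite /= ?mem_edge_low /path_rel.
- by rewrite (inj_eq inl_inj) -val_eqE /=; have := ltn_ord y; move=> *; split; lia.
- by have := edge_low_lt F; move=> *; split; lia.
- by have := ltn_ord y; move=> *; split; lia.
- rewrite (inj_eq inr_inj) xpair_eqE -(inj_eq edge_low_inj) /complete_rel -val_eqE /=.
  by have := edge_low_lt F; move=> *; split; lia.
Qed.

Lemma path_inl (x : 'I_m) s : path eV (inl x) (map inl s) = path G x s.
Proof. by elim: s x => //= y s IH x; rewrite IH. Qed.

Lemma ecorona_rainbow_coloring k (c : V -> 'I_k) :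
  {in interior m' &, injective (fun x => c (inl x))} -> rainbow_coloring eV c.
Proof.
move=> c_inj; apply: (rainbow_coloring_wlog ecorona_sym (h := pos)) => u v uv.
have [<- | neq] := eqVneq u v; first by exists [::]; rewrite /rainbow_path /= eqxx.
have [adj | nadj] := boolP (eV u v).
  by exists [:: v]; rewrite /rainbow_path /= adj eqxx inE neq.
have [a_gt0 ab b_le] := interior_run_bounds neq nadj uv.
set s := ord_iota m' (next_index u) (prev_index v - next_index u).+1.
have mem_s (w : V) : (w \in map inl s) =
    if w is inl x then next_index u <= x <= prev_index v else false.
  case: w => [x|[E w]]; last by apply/mapP => [[]].
  by rewrite (mem_map inl_inj) mem_ord_iota; lia.
have run : next_index u + (prev_index v - next_index u) < m by lia.
have /andP [ps /eqP ls] := path_ord_iota run; rewrite subnKC // in ls.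
exists (rcons (map inl s) v); rewrite rainbow_path_rcons; apply/and3P; split.
- rewrite rcons_path /= adj_next_index; last by lia.
  rewrite path_inl ps last_map ls.
  by apply: adj_prev_index; lia.
- rewrite cons_uniq mem_rcons inE negb_or neq mem_s rcons_uniq mem_s.
  rewrite (map_inj_uniq inl_inj) uniq_ord_iota; last by lia.
  by case: (u) a_gt0 => [x|[E w]]; case: (v) ab b_le => [y|[F w']] //=; lia.
- rewrite -map_comp map_inj_in_uniq ?uniq_ord_iota //; first by lia.
  by apply: (sub_in2 _ c_inj) => x; rewrite mem_ord_iota ?in_interior; lia.
Qed.

Lemma ecorona_rainbow_inj k (c : V -> 'I_k) :
  rainbow_coloring eV c -> {in interior m' &, injective (fun x => c (inl x))}.
Proof.
move=> rc; pose S := [pred a : V | if a is inl x then x \in interior m' else false].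
have c_inj : {in S &, injective c}.
  apply: (rainbow_inj_unavoidable (u := inl ord0) (v := inl ord_max) rc).
  move=> p pp pv [x|//].
  rewrite /S inE in_interior => xI.
  have [|z zp zx] := internal_level (pos_no_skip x) pp; first by rewrite pv /=; lia.
  case: z zp zx => [y|[E w]] zp /= zx; last by lia.
  by have -> : x = y by apply: val_inj => /=; lia.
by move=> x y xI yI /(c_inj (inl x) (inl y) xI yI) [].
Qed.

Section Coloring.
Variable K : nat.
Hypotheses (nK : n + 2 <= K) (mK : m' <= K).

Local Notation left_end := (minn 1 m'.-1).
Local Notation right_end := (maxn 1 m').

(* The end classes are {0, 1} and {m-2, m-1}, degenerating to {0} and
   {1, ..., m-1} when m <= 3. *)
Definition color_nat (a : V) : nat :=
  match a with
  | inl x => if x <= left_end then 0 else if right_end <= x then 1 else x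
  | inr (_, u) => u + 2
  end.

(* An if-free form, suitable for lia. *)
Lemma color_nat_inl (x : 'I_m) :
  color_nat (inl x) = (right_end <= x) + (left_end < x < right_end) * x.
Proof. by rewrite /=; case: ifP => ?; [|case: ifP => ?]; lia. Qed.

Lemma color_nat_lt a : color_nat a < K.
Proof.
case: a => [x|[E u]]; last by have := ltn_ord u; rewrite /=; lia.
by rewrite color_nat_inl; lia.
Qed.

Definition color (a : V) : 'I_K := Ordinal (color_nat_lt a).

Lemma color_val a : val (color a) = color_nat a.
Proof. by []. Qed.

Lemma color_interior_inj : {in interior m' &, injective (fun x => color (inl x))}.
Proof.
move=> x y; rewrite !in_interior => xI yI /(congr1 val).
rewrite !color_val !color_nat_inl => cxy.
by apply: val_inj => /=; lia.
Qed.

Lemma color_class_left : color_class color (color (pvert 0)) = segment 0 left_end.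
Proof.
apply/setP => -[x|[E u]]; [have := ltn_ord x|];
  by rewrite !inE -val_eqE !color_val /pvert !color_nat_inl inordK /=; lia.
Qed.

Lemma color_class_right :
  color_class color (color (pvert m'.+1)) = segment right_end m'.+1.
Proof.
apply/setP => -[x|[E u]]; [have := ltn_ord x|];
  by rewrite !inE -val_eqE !color_val /pvert !color_nat_inl inordK /=; lia.
Qed.

Lemma color_locating : locating_rainbow_coloring eV color.
Proof.
rewrite /locating_rainbow_coloring ecorona_rainbow_coloring /=; last first.
  exact: color_interior_inj.
apply/forallP => u; apply/forallP => v; apply/implyP; apply: contra_neq => codes.
have same i : setdist eV u (color_class color i) = setdist eV v (color_class color i).
  by move/ffunP/(_ i): codes; rewrite !ffunE.
have same_color : color_nat u = color_nat v.
  have u_in : u \in color_class color (color u) by rewrite inE.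
  have := same (color u); rewrite setdist_mem // => /esym/eqP.
  by rewrite setdist_eq0 inE => /eqP/(congr1 val); rewrite !color_val => ->.
have seg_eq lo hi i : lo <= hi < m -> color_class color i = segment lo hi ->
    segment_dist lo hi u = segment_dist lo hi v.
  by move=> lohi ci; have := same i; rewrite ci !setdist_segment // => -[].
have [dist_left dist_right] : segment_dist 0 left_end u = segment_dist 0 left_end v /\
    segment_dist right_end m'.+1 u = segment_dist right_end m'.+1 v.
  by split; apply: seg_eq; [lia | exact: color_class_left | lia | exact: color_class_right].
case: u v same_color dist_left dist_right {same codes seg_eq} => [x|[E w]] [y|[F w']];
  rewrite ?color_nat_inl /= => col dl dr.
- by congr inl; apply: val_inj => /=; have := ltn_ord x; have := ltn_ord y; lia.
- by exfalso; have := ltn_ord x; have := edge_low_lt F; lia.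
- by exfalso; have := ltn_ord y; have := edge_low_lt E; lia.
- have -> : w = w' by apply: val_inj => /=; lia.
  have := edge_low_lt E; have := edge_low_lt F => *.
  by have -> : E = F by apply: edge_low_inj; lia.
Qed.

End Coloring.

Definition base_clique (a : V) : bool :=
  match a with inl x => x == 0 :> nat | inr (E, _) => edge_low E == 0 end.

Definition base_vertex (o : option 'I_n) : V :=
  if o is Some u then inr (edge01, u) else pvert 0.

Lemma base_vertex_inj : injective base_vertex.
Proof. by move=> [u|] [w|] //= [->]. Qed.

Lemma base_clique_vertex o : base_clique (base_vertex o).
Proof. by case: o => [u|] /=; rewrite ?edge_low01 ?inordK. Qed.

Lemma adj_base_clique a w :
  base_clique a -> w != a -> eV a w = base_clique w || (w == pvert 1).
Proof.
case: a => [x|[E u]]; case: w => [y|[F w]] /= base wa; rewrite /pvert -sum_eqE /=.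
- rewrite -sum_eqE /= -val_eqE /= in wa; rewrite /path_rel -val_eqE /= inordK //; lia.
- by rewrite mem_edge_low; lia.
- by rewrite mem_edge_low -val_eqE /= inordK //; lia.
- rewrite -sum_eqE /= xpair_eqE -(inj_eq edge_low_inj) -val_eqE /= in wa.
  by rewrite /complete_rel -(inj_eq edge_low_inj) -val_eqE /=; lia.
Qed.

Lemma base_twins o o' : o != o' -> true_twins eV (base_vertex o) (base_vertex o').
Proof.
move=> oo'; have ne : base_vertex o' != base_vertex o.
  by rewrite (inj_eq base_vertex_inj) eq_sym.
split; first by rewrite adj_base_clique ?base_clique_vertex.
by move=> w w_o w_o'; rewrite !adj_base_clique ?base_clique_vertex.
Qed.

Lemma pvert1_adj_base o : pvert 1 != base_vertex o /\ eV (pvert 1) (base_vertex o).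
Proof.
have ne : pvert 1 != base_vertex o.
  by case: o => [u|]; rewrite /= /pvert // (inj_eq inl_inj) -val_eqE /= !inordK.
by split=> //; rewrite ecorona_sym adj_base_clique ?base_clique_vertex ?eqxx ?orbT.
Qed.

Lemma ecorona_locating_ge k (c : V -> 'I_k) :
  locating_rainbow_coloring eV c -> n + 2 <= k.
Proof.
move=> lc; have := locating_twin_family ecorona_sym ecorona_irr lc
  base_vertex_inj base_twins pvert1_adj_base.
by rewrite card_option card_ord addn2.
Qed.

End EdgeCoronaPathComplete.

Theorem theorem5 (m n : nat) (hm : 2 <= m) (hn : 2 <= n) :
  rvcl (ecorona_rel (path_rel m) (complete_rel n))
  = maxn (rvc (path_rel m)) (n + 2).
Proof.
case: m hm => [|[|m']] // _.
have r_ge := rvc_path_ge m'.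
have r_le := rvc_le_card (path_rel m'.+2); rewrite card_ord in r_le.
have card := card_ecorona m' n.
have nK : n + 2 <= maxn (rvc (path_rel m'.+2)) (n + 2) by exact: leq_maxr.
have mK : m' <= maxn (rvc (path_rel m'.+2)) (n + 2) by lia.
apply/eqP; rewrite eqn_leq (rvcl_le (color_locating nK mK)) /=.
apply: rvcl_ge => [|k c lc]; first by apply: leq_trans _ (leqW card); lia.
rewrite geq_max (ecorona_locating_ge lc) andbT.
apply: rvc_le (path_rainbow_coloring (ecorona_rainbow_inj (proj1 (andP lc)))).
Qed.
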